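(* Let $S=\{0,1,\dots,p-1\}$ with $p\ge 2$, let $m\ge 2$, and let $f:S^m\to S$ be a local rule. If there exists a pair of replaceable local configurations for $f$, then there exists a pair of periodic local configurations for $f$.
   Context: A local configuration is a finite word over $S$. For a word $w=w_1w_2\cdots w_n$ with $n\ge m$, its successor under $f$ is the word $\hat f(w)=u_1\cdots u_{n-m+1}$ with $u_j=f(w_j,w_{j+1},\dots,w_{j+m-1})$. For $k\le n$, $\mathrm{left}_k(w)=w_1\cdots w_k$ and $\mathrm{right}_k(w)=w_{n-k+1}\cdots w_n$. Two local configurations $\alpha,\beta$ of the same length $n$ are replaceable if: $n\ge 2m-1$; $\alpha\ne\beta$; $\mathrm{left}_{m-1}(\alpha)=\mathrm{left}_{m-1}(\beta)$; $\mathrm{right}_{m-1}(\alpha)=\mathrm{right}_{m-1}(\beta)$; and $\hat f(\alpha)=\hat f(\beta)$. They are periodic if: $n\ge m$; $\alpha\ne\beta$; $\mathrm{left}_{m-1}(\alpha)=\mathrm{right}_{m-1}(\alpha)$; $\mathrm{left}_{m-1}(\beta)=\mathrm{right}_{m-1}(\beta)$; and $\hat f(\alpha)=\hat f(\beta)$. *)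

From mathcomp Require Import all_boot.
Set Implicit Arguments. Unset Strict Implicit. Unset Printing Implicit Defensive.

(* S = 'I_p = {0,...,p-1}; a local rule f : S^m -> S is a function on m-tuples.
   Local configurations are finite words w : seq 'I_p (w_1 ... w_n is w`_0 ... w`_(n-1)). *)

(* the window (w_{j+1}, ..., w_{j+m}) (0-based start index j), as an m-tuple;
   x0 is a default that is never used when j + m <= size w. *)
Definition window {p : nat} (m : nat) (x0 : 'I_p) (w : seq 'I_p) (j : nat)
  : m.-tuple 'I_p :=
  [tuple nth x0 w (j + i) | i < m].

(* successor \hat f(w) = u_1 ... u_{n-m+1} with u_j = f(w_j, ..., w_{j+m-1}),
   for a word w of length n >= m. *)
Definition succ_word {p m : nat} (f : m.-tuple 'I_p -> 'I_p) (w : seq 'I_p)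
  : seq 'I_p :=
  match w with
  | [::] => [::]
  | x0 :: _ => [seq f (window m x0 w j) | j <- iota 0 (size w - m + 1)]
  end.

Definition left_k {T : Type} (k : nat) (w : seq T) : seq T := take k w.
Definition right_k {T : Type} (k : nat) (w : seq T) : seq T := drop (size w - k) w.

Definition replaceable {p m : nat} (f : m.-tuple 'I_p -> 'I_p)
  (a b : seq 'I_p) : Prop :=
  size a = size b /\
      2 * m - 1 <= size a /\
      a <> b /\
      left_k (m - 1) a = left_k (m - 1) b /\
      right_k (m - 1) a = right_k (m - 1) b /\
      succ_word f a = succ_word f b.

Definition periodic_pair {p m : nat} (f : m.-tuple 'I_p -> 'I_p)
  (a b : seq 'I_p) : Prop :=
  size a = size b /\
      m <= size a /\
      a <> b /\
      left_k (m - 1) a = right_k (m - 1) a /\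
      left_k (m - 1) b = right_k (m - 1) b /\
      succ_word f a = succ_word f b.

From mathcomp Require Import all_boot.
From mathcomp Require Import zify.
Set Implicit Arguments. Unset Strict Implicit. Unset Printing Implicit Defensive.

(* Let (a, b) be replaceable and put u := left_{m-1}(a) = left_{m-1}(b).  The
   pair (a ++ u, b ++ u) is periodic:
   - appending to a word w its own prefix of length k makes the left and the
     right k-blocks of the result coincide (lemma [left_k_cat_left_k]);
   - the successor of a word is determined by the values of f on its windows
     of length m (lemmas [succ_word_eq_windows] and [windows_eq_succ_word]);
   - if a and b have the same successor and the same suffix of length m - 1,
     then a ++ u and b ++ u have the same successor for every u: windows
     contained in a are handled by hypothesis, and every other window only
     reads the common suffix of a and b followed by u
     (lemma [succ_word_cat_right]).
   The words a ++ u and b ++ u stay distinct since a and b have equal lengths. *)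

Section Windows.

Variables (p m : nat) (f : m.-tuple 'I_p -> 'I_p).

Lemma eq_window (x0 y0 : 'I_p) (w w' : seq 'I_p) (j : nat) :
  (forall i, j <= i < j + m -> nth x0 w i = nth y0 w' i) ->
  window m x0 w j = window m y0 w' j.
Proof. by move=> Hw; apply: eq_mktuple => i; apply: Hw; have := ltn_ord i; lia. Qed.

Lemma window_default (x0 y0 : 'I_p) (w : seq 'I_p) (j : nat) :
  j + m <= size w -> window m x0 w j = window m y0 w j.
Proof. by move=> Hj; apply: eq_window => i Hi; apply: set_nth_default; lia. Qed.

Lemma nth_succ_word (x0 : 'I_p) (w : seq 'I_p) (j : nat) :
  0 < m -> j + m <= size w ->
  nth x0 (succ_word f w) j = f (window m x0 w j).
Proof.
case: w => [|x w] Hm /= Hj; first lia.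
rewrite (nth_map 0) ?size_iota ?nth_iota ?add0n; try lia.
by congr f; apply: window_default.
Qed.

Lemma windows_eq_succ_word (w w' : seq 'I_p) :
  size w = size w' -> m <= size w ->
  (forall x0 j, j + m <= size w -> f (window m x0 w j) = f (window m x0 w' j)) ->
  succ_word f w = succ_word f w'.
Proof.
case: w w' => [|x w] [|y w'] //= [Hs] Hm Hf.
rewrite Hs; apply/eq_in_map => j; rewrite mem_iota => /andP [_ Hj].
rewrite (window_default x y); last by rewrite /=; lia.
by apply: Hf => /=; lia.
Qed.

Lemma succ_word_eq_windows (w w' : seq 'I_p) (x0 : 'I_p) (j : nat) :
  0 < m -> size w = size w' -> succ_word f w = succ_word f w' ->
  j + m <= size w -> f (window m x0 w j) = f (window m x0 w' j).
Proof.
move=> Hm Hs Hsucc Hj.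
by rewrite -!nth_succ_word -?Hs // Hsucc.
Qed.

Lemma succ_word_cat_right (a b u : seq 'I_p) :
  0 < m -> m <= size a -> size a = size b ->
  right_k (m - 1) a = right_k (m - 1) b -> succ_word f a = succ_word f b ->
  succ_word f (a ++ u) = succ_word f (b ++ u).
Proof.
move=> Hm Ha Hs Hr Hsucc.
have Htail x i : size a - (m - 1) <= i -> nth x a i = nth x b i.
  move=> Hi; have := congr1 (nth x ^~ (i - (size a - (m - 1)))) Hr.
  by rewrite /right_k -Hs !nth_drop subnKC.
apply: windows_eq_succ_word; rewrite ?size_cat ?Hs //; first lia.
move=> x0 j Hj; case: (leqP (j + m) (size a)) => Hja.
- have -> : window m x0 (a ++ u) j = window m x0 a j.
    by apply: eq_window => i Hi; rewrite nth_cat ifT //; lia.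
  have -> : window m x0 (b ++ u) j = window m x0 b j.
    by apply: eq_window => i Hi; rewrite nth_cat ifT // -Hs; lia.
  exact: succ_word_eq_windows.
- congr f; apply: eq_window => i Hi; rewrite !nth_cat -Hs.
  by case: ltnP => // Hia; apply: Htail; lia.
Qed.

End Windows.

Lemma left_k_cat_left_k (T : Type) (k : nat) (w v : seq T) :
  k <= size w -> left_k k w = v ->
  left_k k (w ++ v) = v /\ right_k k (w ++ v) = v.
Proof.
move=> Hk Hv; have Hsv : size v = k by rewrite -Hv size_takel.
split; first by rewrite /left_k takel_cat.
by rewrite /right_k size_cat Hsv addnK drop_size_cat.
Qed.

Theorem lemma5 (p m : nat) (f : m.-tuple 'I_p -> 'I_p) :
  2 <= p -> 2 <= m ->
  (exists a b : seq 'I_p, replaceable f a b) ->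
  exists a b : seq 'I_p, periodic_pair f a b.
Proof.
move=> _ Hm [a [b [Hs [Ha [Hab [Hl [Hr Hsucc]]]]]]].
set u := left_k (m - 1) a.
have [Hla Hra] : left_k (m - 1) (a ++ u) = u /\ right_k (m - 1) (a ++ u) = u.
  by apply: left_k_cat_left_k => //; lia.
have [Hlb Hrb] : left_k (m - 1) (b ++ u) = u /\ right_k (m - 1) (b ++ u) = u.
  by apply: left_k_cat_left_k; [rewrite -Hs; lia | rewrite -Hl].
exists (a ++ u), (b ++ u); split; first by rewrite !size_cat Hs.
split; first by rewrite size_cat; lia.
split; first by move=> /eqP; rewrite eqseq_cat // => /andP [/eqP].
split; first by rewrite Hla Hra.
split; first by rewrite Hlb Hrb.
by apply: succ_word_cat_right => //; lia.
Qed.
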